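(* Let $n\ge3$, $\mu_1,\mu_2,\beta>0$, $p=2q+1$ with $\frac{n}{n-2}<p<\frac{n+2}{n-2}$, let $(u,v)$ be a positive solution of (S) (radially symmetric), and let $\bar u,\bar v$ be its Kelvin transform and $\bar w_1,\bar w_2$ as defined in the context. Then (1) $\bar u'(r)<0$ and $\bar v'(r)<0$ for all $r>0$; (2) $\bar w_i'(t)>-\delta_0\bar w_i(t)$ for all $t\in\mathbb{R}$, $i=1,2$.
   Context: System (S): $-\Delta u=\mu_1u^{2q+1}+\beta u^qv^{q+1}$, $-\Delta v=\mu_2v^{2q+1}+\beta v^qu^{q+1}$ in $\mathbb{R}^n\setminus\{0\}$; positive solutions are $C^2(\mathbb{R}^n\setminus\{0\})$ pairs with $u,v>0$. Kelvin transform: $\bar u(x)=|x|^{2-n}u(x/|x|^2)$, $\bar v(x)=|x|^{2-n}v(x/|x|^2)$; it solves $-\Delta\bar u=|x|^\alpha(\mu_1\bar u^{2q+1}+\beta\bar u^q\bar v^{q+1})$, $-\Delta\bar v=|x|^\alpha(\mu_2\bar v^{2q+1}+\beta\bar v^q\bar u^{q+1})$ in $\mathbb{R}^n\setminus\{0\}$ with $\alpha=p(n-2)-(n+2)\in(-2,0)$; radial functions are written $\bar u(x)=\bar u(|x|)$. $\delta_0=\frac{2+\alpha}{p-1}$, $\bar w_1(t)=e^{-\delta_0t}\bar u(e^{-t})$, $\bar w_2(t)=e^{-\delta_0t}\bar v(e^{-t})$. *)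

From Stdlib Require Import Reals.
Open Scope R_scope.

Definition dimR (n : nat) : R := INR n.

Definition pexp (q : R) : R := 2 * q + 1.

Definition alpha (n : nat) (q : R) : R :=
  pexp q * (dimR n - 2) - (dimR n + 2).

Definition delta0 (n : nat) (q : R) : R := (2 + alpha n q) / (pexp q - 1).

Definition C2_pos (U U1 U2 : R -> R) : Prop :=
  forall r, 0 < r ->
    derivable_pt_lim U r (U1 r) /\
    derivable_pt_lim U1 r (U2 r) /\
    continuity_pt U2 r.

(* Radial Laplacian in R^n of x |-> U(|x|), at |x| = r > 0:
   U''(r) + (n-1)/r U'(r). *)
Definition radial_lap (n : nat) (U1 U2 : R -> R) (r : R) : R :=
  U2 r + (dimR n - 1) / r * U1 r.

(* (U,V) are the radial profiles of a positive C^2 solution of (S) on R^n\{0}: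
   -Δu = mu1 u^{2q+1} + beta u^q v^{q+1},
   -Δv = mu2 v^{2q+1} + beta v^q u^{q+1}. *)
Definition radial_positive_solution (n : nat) (mu1 mu2 beta q : R)
  (U V : R -> R) : Prop :=
  exists U1 U2 V1 V2 : R -> R,
    C2_pos U U1 U2 /\ C2_pos V V1 V2 /\
    forall r, 0 < r ->
      0 < U r /\ 0 < V r /\
      - radial_lap n U1 U2 r =
        mu1 * Rpower (U r) (2 * q + 1)
        + beta * Rpower (U r) q * Rpower (V r) (q + 1) /\
      - radial_lap n V1 V2 r =
        mu2 * Rpower (V r) (2 * q + 1)
        + beta * Rpower (V r) q * Rpower (U r) (q + 1).

Definition kelvin (n : nat) (U : R -> R) (r : R) : R :=
  Rpower r (2 - dimR n) * U (/ r).

Definition wbar (n : nat) (q : R) (Ub : R -> R) (t : R) : R :=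
  exp (- delta0 n q * t) * Ub (exp (- t)).

(* For a positive radial function U with ΔU < 0 in dimension n >= 2, the
   combination g(s) = (n-2) U(s) + s U'(s) satisfies g' = s ΔU < 0, so g is
   strictly decreasing.  It is also positive: otherwise g <= -c < 0 on some
   half-line [a, +oo), whence (U + c ln)' = (g - (n-2) U + c)/s <= 0 there and
   U would reach 0 by the time ln s has grown by U(a)/c.  The Kelvin transform
   has slope -r^(1-n) g(1/r), hence is strictly decreasing; and since
   w(t) = e^(-δ0 t) ū(e^(-t)), the chain rule gives
   w' + δ0 w = -e^(-δ0 t) e^(-t) ū'(e^(-t)) > 0. *)

From Stdlib Require Import Reals Lra Lia.
Open Scope R_scope.

Lemma derivable_pt_lim_Rinv (x : R) :
  x <> 0 -> derivable_pt_lim Rinv x (- / (x * x)).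
Proof.
  intros Hx.
  replace (- / (x * x)) with ((0 * id x - 1 * fct_cte 1 x) / (id x)²)
    by (unfold fct_cte, id, Rsqr; field; exact Hx).
  apply (derivable_pt_lim_ext (fct_cte 1 / id)%F).
  - intros y. unfold div_fct, fct_cte, id. apply Rmult_1_l.
  - apply derivable_pt_lim_div;
      [apply derivable_pt_lim_const | apply derivable_pt_lim_id | exact Hx].
Qed.

Lemma Rpower_pos (x y : R) : 0 < Rpower x y.
Proof. apply exp_pos. Qed.

(* The derivative at λ = 1 of λ^(n-2) U(λ s), the scaling that commutes with
   the Kelvin transform. *)
Definition scaling_deriv (n : nat) (U U1 : R -> R) (s : R) : R :=
  (dimR n - 2) * U s + s * U1 s.

Lemma kelvin_derive (n : nat) (U U1 : R -> R) (r : R) :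
  0 < r -> derivable_pt_lim U (/ r) (U1 (/ r)) ->
  derivable_pt_lim (kelvin n U) r
    (- Rpower r (1 - dimR n) * scaling_deriv n U U1 (/ r)).
Proof.
  intros Hr HU.
  assert (Hpow : Rpower r (2 - dimR n) = Rpower r (1 - dimR n) * r).
  { replace (2 - dimR n) with ((1 - dimR n) + 1) by ring.
    rewrite Rpower_plus, Rpower_1 by exact Hr. reflexivity. }
  replace (- Rpower r (1 - dimR n) * scaling_deriv n U U1 (/ r)) with
    ((2 - dimR n) * Rpower r (2 - dimR n - 1) * U (/ r)
     + Rpower r (2 - dimR n) * (U1 (/ r) * - / (r * r))).
  - apply (derivable_pt_lim_mult (fun x => Rpower x (2 - dimR n)) (comp U Rinv)).
    + apply derivable_pt_lim_power, Hr.
    + apply derivable_pt_lim_comp; [apply derivable_pt_lim_Rinv; lra | exact HU].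
  - replace (2 - dimR n - 1) with (1 - dimR n) by ring.
    rewrite Hpow. unfold scaling_deriv. field. lra.
Qed.

Lemma wbar_derive (n : nat) (q : R) (Ub : R -> R) (t l : R) :
  derivable_pt_lim Ub (exp (- t)) l ->
  derivable_pt_lim (wbar n q Ub) t
    (- delta0 n q * wbar n q Ub t
     - exp (- delta0 n q * t) * exp (- t) * l).
Proof.
  intros HUb. set (d := delta0 n q).
  replace (- d * wbar n q Ub t - exp (- d * t) * exp (- t) * l) with
    (exp (- d * t) * (- d * 1) * Ub (exp (- t))
     + exp (- d * t) * (l * (exp (- t) * - 1))).
  - apply (derivable_pt_lim_mult (comp exp (fun t => - d * t))
                                 (comp Ub (comp exp Ropp))).
    + apply derivable_pt_lim_comp; [|apply derivable_pt_lim_exp].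
      apply (derivable_pt_lim_scal id), derivable_pt_lim_id.
    + apply derivable_pt_lim_comp; [|exact HUb].
      apply derivable_pt_lim_comp; [|apply derivable_pt_lim_exp].
      apply (derivable_pt_lim_opp id), derivable_pt_lim_id.
  - unfold wbar. fold d. ring.
Qed.

Lemma wbar_slope_gt (n : nat) (q : R) (Ub : R -> R) :
  (forall r, 0 < r -> exists l, derivable_pt_lim Ub r l /\ l < 0) ->
  forall t, exists l, derivable_pt_lim (wbar n q Ub) t l /\
              l > - delta0 n q * wbar n q Ub t.
Proof.
  intros HUb t.
  destruct (HUb (exp (- t)) (exp_pos _)) as [l [Hl Hl_neg]].
  eexists. split; [exact (wbar_derive n q Ub t l Hl)|].
  assert (0 < exp (- delta0 n q * t) * exp (- t)) by (apply Rmult_lt_0_compat; apply exp_pos).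
  nra.
Qed.

Section PositiveSuperharmonic.

Variables (n : nat) (U U1 U2 : R -> R).
Hypothesis Hn : (2 <= n)%nat.
Hypothesis HU : C2_pos U U1 U2.
Hypothesis Hsuper : forall r, 0 < r -> 0 < U r /\ radial_lap n U1 U2 r < 0.

Let g := scaling_deriv n U U1.

Lemma scaling_deriv_derive (s : R) :
  0 < s -> derivable_pt_lim g s (s * radial_lap n U1 U2 s).
Proof.
  intros Hs. destruct (HU s Hs) as [HU1 [HU2 _]].
  replace (s * radial_lap n U1 U2 s) with
    ((dimR n - 2) * U1 s + (1 * U1 s + s * U2 s))
    by (unfold radial_lap; field; lra).
  apply derivable_pt_lim_plus.
  - apply (derivable_pt_lim_scal U), HU1.
  - apply (derivable_pt_lim_mult id U1); [apply derivable_pt_lim_id | exact HU2].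
Qed.

Lemma scaling_deriv_decreasing (a b : R) : 0 < a -> a < b -> g b < g a.
Proof.
  intros Ha Hab.
  destruct (MVT_cor2 g (fun s => s * radial_lap n U1 U2 s) a b Hab)
    as [c [Hmvt Hc]].
  { intros c Hc. apply scaling_deriv_derive. lra. }
  assert (Hlap : radial_lap n U1 U2 c < 0) by (apply Hsuper; lra).
  assert (0 < c * (b - a)) by (apply Rmult_lt_0_compat; lra).
  nra.
Qed.

Lemma scaling_deriv_not_bounded_away (a c : R) :
  0 < a -> 0 < c -> ~ (forall s, a <= s -> g s <= - c).
Proof.
  intros Ha Hc Hbound.
  assert (Hdim : 0 <= dimR n - 2) by (unfold dimR; apply le_INR in Hn; simpl in Hn; lra).
  set (b := a * exp (U a / c)).
  assert (Hab : a < b).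
  { assert (1 < exp (U a / c)).
    { rewrite <- exp_0. apply exp_increasing.
      apply Rdiv_lt_0_compat; [apply Hsuper, Ha | exact Hc]. }
    unfold b. nra. }
  destruct (MVT_cor2 (fun s => U s + c * ln s) (fun s => U1 s + c * / s) a b Hab)
    as [x [Hmvt Hx]].
  { intros x Hx. apply derivable_pt_lim_plus.
    - apply HU. lra.
    - apply (derivable_pt_lim_scal ln), derivable_pt_lim_ln. lra. }
  assert (Hslope : U1 x + c * / x <= 0).
  { assert (Hgx : g x <= - c) by (apply Hbound; lra).
    assert (0 < U x) by (apply Hsuper; lra).
    unfold g, scaling_deriv in Hgx.
    assert (x * U1 x + c <= 0) by nra.
    replace (U1 x + c * / x) with ((x * U1 x + c) / x) by (field; lra).
    assert (0 < / x) by (apply Rinv_0_lt_compat; lra).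
    unfold Rdiv. nra. }
  assert (Hlnb : ln b = ln a + U a / c)
    by (unfold b; rewrite ln_mult, ln_exp by (try apply exp_pos; lra); reflexivity).
  assert (0 < U b) by (apply Hsuper; lra).
  assert ((U1 x + c * / x) * (b - a) <= 0) by nra.
  rewrite Hlnb in Hmvt.
  replace (c * (ln a + U a / c)) with (c * ln a + U a) in Hmvt by (field; lra).
  lra.
Qed.

Lemma scaling_deriv_pos (s : R) : 0 < s -> 0 < g s.
Proof.
  intros Hs. apply Rnot_le_lt. intros Hg.
  apply (scaling_deriv_not_bounded_away (s + 1) (- g (s + 1))); [lra | |].
  - assert (g (s + 1) < g s) by (apply scaling_deriv_decreasing; lra). lra.
  - intros x Hx. destruct (Rle_lt_or_eq_dec _ _ Hx) as [Hlt | <-].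
    + assert (g x < g (s + 1)) by (apply scaling_deriv_decreasing; lra). lra.
    + lra.
Qed.

Lemma kelvin_slope_neg (r : R) :
  0 < r -> exists l, derivable_pt_lim (kelvin n U) r l /\ l < 0.
Proof.
  intros Hr.
  assert (Hr' : 0 < / r) by (apply Rinv_0_lt_compat, Hr).
  eexists. split.
  - apply kelvin_derive; [exact Hr | apply HU, Hr'].
  - assert (0 < Rpower r (1 - dimR n)) by apply Rpower_pos.
    assert (0 < g (/ r)) by (apply scaling_deriv_pos, Hr').
    unfold g in *. nra.
Qed.

End PositiveSuperharmonic.

Lemma coupled_rhs_pos (mu beta q x y : R) :
  0 < mu -> 0 < beta ->
  0 < mu * Rpower x (2 * q + 1) + beta * Rpower x q * Rpower y (q + 1).
Proof.
  intros Hmu Hbeta.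
  pose proof (Rpower_pos x (2 * q + 1)). pose proof (Rpower_pos x q).
  pose proof (Rpower_pos y (q + 1)).
  apply Rplus_lt_0_compat; repeat apply Rmult_lt_0_compat; assumption.
Qed.

Lemma radial_positive_solution_superharmonic (n : nat) (mu1 mu2 beta q : R)
    (U V : R -> R) :
  0 < mu1 -> 0 < mu2 -> 0 < beta ->
  radial_positive_solution n mu1 mu2 beta q U V ->
  exists U1 U2 V1 V2 : R -> R,
    C2_pos U U1 U2 /\ C2_pos V V1 V2 /\
    (forall r, 0 < r -> 0 < U r /\ radial_lap n U1 U2 r < 0) /\
    (forall r, 0 < r -> 0 < V r /\ radial_lap n V1 V2 r < 0).
Proof.
  intros Hmu1 Hmu2 Hbeta (U1 & U2 & V1 & V2 & HU & HV & Hsol).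
  exists U1, U2, V1, V2. split; [exact HU|]. split; [exact HV|].
  split; intros r Hr; destruct (Hsol r Hr) as (HUr & HVr & HeqU & HeqV).
  - pose proof (coupled_rhs_pos mu1 beta q (U r) (V r) Hmu1 Hbeta). lra.
  - pose proof (coupled_rhs_pos mu2 beta q (V r) (U r) Hmu2 Hbeta). lra.
Qed.

Theorem lemma4p4 (n : nat) (mu1 mu2 beta q : R) (U V : R -> R) :
  (3 <= n)%nat ->
  0 < mu1 -> 0 < mu2 -> 0 < beta ->
  dimR n / (dimR n - 2) < pexp q ->
  pexp q < (dimR n + 2) / (dimR n - 2) ->
  radial_positive_solution n mu1 mu2 beta q U V ->
  (forall r, 0 < r ->
     (exists l, derivable_pt_lim (kelvin n U) r l /\ l < 0) /\
     (exists l, derivable_pt_lim (kelvin n V) r l /\ l < 0)) /\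
  (forall t : R,
     (exists l, derivable_pt_lim (wbar n q (kelvin n U)) t l /\
                l > - delta0 n q * wbar n q (kelvin n U) t) /\
     (exists l, derivable_pt_lim (wbar n q (kelvin n V)) t l /\
                l > - delta0 n q * wbar n q (kelvin n V) t)).
Proof.
  intros Hn Hmu1 Hmu2 Hbeta _ _ Hsol.
  assert (Hn2 : (2 <= n)%nat) by lia.
  destruct (radial_positive_solution_superharmonic n mu1 mu2 beta q U V
              Hmu1 Hmu2 Hbeta Hsol) as (U1 & U2 & V1 & V2 & HU & HV & SU & SV).
  pose proof (kelvin_slope_neg n U U1 U2 Hn2 HU SU) as KU.
  pose proof (kelvin_slope_neg n V V1 V2 Hn2 HV SV) as KV.
  split.
  - intros r Hr. split; [apply KU | apply KV]; exact Hr.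
  - intros t. split; apply wbar_slope_gt; assumption.
Qed.
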